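(* Let $J\in\mathbb{R}^{3\times3}$ be symmetric positive definite and let $R_d\in\mathsf{SO(3)}$ be constant (so $\Omega_d\equiv0$ and $e_\Omega=\Omega$). Let $k_R,k_\Omega>0$ and define the control $$u'=-k_Re_R-k_\Omega e_\Omega,$$ which does not depend on $J$. Consider the closed-loop system $J\dot\Omega+\Omega\times J\Omega=u'$, $\dot R=R\hat\Omega$. If the initial condition satisfies $$\Psi(R(0),R_d)<2,\qquad \|\Omega(0)\|^2<\frac{2k_R}{\lambda_{\max}(J)}\big(2-\Psi(R(0),R_d)\big),$$ then $\Psi(R(t),R_d)<2$ for all $t\ge0$, and the zero equilibrium $(e_R,e_\Omega)=(0,0)$ is exponentially stable with this set contained in its region of attraction: there exist constants $C,\beta>0$ (depending on $J,k_R,k_\Omega$) such that $$\|e_R(t)\|^2+\|e_\Omega(t)\|^2\le C\big(\|e_R(0)\|^2+\|e_\Omega(0)\|^2\big)e^{-\beta t}\quad\text{for all }t\ge0.$$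
   Context: $\mathsf{SO(3)}$ is the group of $3\times3$ rotation matrices; $\hat x$ denotes the skew-symmetric matrix with $\hat x y=x\times y$, and $\vee$ is its inverse. $\Psi(R,R_d)=2-\sqrt{1+\mathrm{tr}(R_d^TR)}$, $e_R=\frac{1}{2\sqrt{1+\mathrm{tr}(R_d^TR)}}(R_d^TR-R^TR_d)^\vee$ (defined when $\Psi<2$), and $e_\Omega=\Omega-R^TR_d\Omega_d$, which equals $\Omega$ here. $\lambda_{\max}(J)$ is the largest eigenvalue of $J$. *)

From Stdlib Require Import Reals.
Open Scope R_scope.

(* Vectors of R^3 and 3x3 matrices, indexed by 0,1,2 (other indices unused). *)
Definition vec := nat -> R.
Definition mat := nat -> nat -> R.

Definition mv (A : mat) (x : vec) : vec :=
  fun i => A i 0%nat * x 0%nat + A i 1%nat * x 1%nat + A i 2%nat * x 2%nat.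
Definition mm (A B : mat) : mat :=
  fun i j => A i 0%nat * B 0%nat j + A i 1%nat * B 1%nat j + A i 2%nat * B 2%nat j.
Definition transp (A : mat) : mat := fun i j => A j i.
Definition msub (A B : mat) : mat := fun i j => A i j - B i j.
Definition idm : mat := fun i j => if Nat.eqb i j then 1 else 0.
Definition trace (A : mat) : R := A 0%nat 0%nat + A 1%nat 1%nat + A 2%nat 2%nat.
Definition det3 (A : mat) : R :=
  A 0%nat 0%nat * (A 1%nat 1%nat * A 2%nat 2%nat - A 1%nat 2%nat * A 2%nat 1%nat)
  - A 0%nat 1%nat * (A 1%nat 0%nat * A 2%nat 2%nat - A 1%nat 2%nat * A 2%nat 0%nat)
  + A 0%nat 2%nat * (A 1%nat 0%nat * A 2%nat 1%nat - A 1%nat 1%nat * A 2%nat 0%nat).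

Definition vadd (x y : vec) : vec := fun i => x i + y i.
Definition vsub (x y : vec) : vec := fun i => x i - y i.
Definition vscale (c : R) (x : vec) : vec := fun i => c * x i.
Definition vzero : vec := fun _ => 0.
Definition dot (x y : vec) : R := x 0%nat * y 0%nat + x 1%nat * y 1%nat + x 2%nat * y 2%nat.
Definition norm2 (x : vec) : R := dot x x.

Definition cross (x y : vec) : vec :=
  fun i => match i with
           | 0%nat => x 1%nat * y 2%nat - x 2%nat * y 1%nat
           | 1%nat => x 2%nat * y 0%nat - x 0%nat * y 2%nat
           | _ => x 0%nat * y 1%nat - x 1%nat * y 0%nat
           end.

(* hat map: hat x y = x × y *)
Definition hat (x : vec) : mat :=
  fun i j => match i, j with
             | 0%nat, 1%nat => - x 2%nat
             | 0%nat, 2%nat => x 1%nat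
             | 1%nat, 0%nat => x 2%nat
             | 1%nat, 2%nat => - x 0%nat
             | 2%nat, 0%nat => - x 1%nat
             | 2%nat, 1%nat => x 0%nat
             | _, _ => 0
             end.
(* vee map: inverse of hat on skew-symmetric matrices *)
Definition vee (M : mat) : vec :=
  fun i => match i with
           | 0%nat => M 2%nat 1%nat
           | 1%nat => M 0%nat 2%nat
           | _ => M 1%nat 0%nat
           end.

Definition mat_eq (A B : mat) : Prop := forall i j, (i < 3)%nat -> (j < 3)%nat -> A i j = B i j.
Definition vec_eq (x y : vec) : Prop := forall i, (i < 3)%nat -> x i = y i.
Definition vec_nonzero (x : vec) : Prop := exists i, (i < 3)%nat /\ x i <> 0.

Definition in_SO3 (Rm : mat) : Prop := mat_eq (mm (transp Rm) Rm) idm /\ det3 Rm = 1.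

Definition sym_pos_def (J : mat) : Prop :=
  mat_eq (transp J) J /\ forall x, vec_nonzero x -> dot x (mv J x) > 0.

Definition is_eigenvalue (J : mat) (l : R) : Prop :=
  exists x, vec_nonzero x /\ vec_eq (mv J x) (vscale l x).
Definition is_lambda_max (J : mat) (l : R) : Prop :=
  is_eigenvalue J l /\ forall m, is_eigenvalue J m -> m <= l.

Definition Psi (Rm Rd : mat) : R := 2 - sqrt (1 + trace (mm (transp Rd) Rm)).
Definition e_R (Rm Rd : mat) : vec :=
  vscale (1 / (2 * sqrt (1 + trace (mm (transp Rd) Rm))))
         (vee (msub (mm (transp Rd) Rm) (mm (transp Rm) Rd))).
Definition e_Omega (Rm Rd : mat) (Om Omd : vec) : vec :=
  vsub Om (mv (mm (transp Rm) Rd) Omd).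

(* The control u' = - kR e_R - kOm e_Omega, with Omega_d = 0 (R_d constant);
   it does not involve J. *)
Definition control (kR kOm : R) (Rm Rd : mat) (Om : vec) : vec :=
  vsub (vscale (- kR) (e_R Rm Rd)) (vscale kOm (e_Omega Rm Rd Om vzero)).

Definition cont_nonneg (f : R -> R) : Prop :=
  forall t, 0 <= t -> forall eps, eps > 0 -> exists delta, delta > 0 /\
    forall s, 0 <= s -> Rabs (s - t) < delta -> Rabs (f s - f t) < eps.

Definition closed_loop_solution (J : mat) (kR kOm : R) (Rd : mat)
    (Rt : R -> mat) (Om dOm : R -> vec) : Prop :=
  (forall i j, (i < 3)%nat -> (j < 3)%nat -> cont_nonneg (fun s => Rt s i j)) /\
  (forall i, (i < 3)%nat -> cont_nonneg (fun s => Om s i)) /\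
  (forall t, t > 0 ->
     (forall i j, (i < 3)%nat -> (j < 3)%nat ->
        derivable_pt_lim (fun s => Rt s i j) t (mm (Rt t) (hat (Om t)) i j)) /\
     (forall i, (i < 3)%nat -> derivable_pt_lim (fun s => Om s i) t (dOm t i)) /\
     vec_eq (vadd (mv J (dOm t)) (cross (Om t) (mv J (Om t))))
            (control kR kOm (Rt t) Rd (Om t))).

From Stdlib Require Import Reals Lra Lia Psatz Classical.
Open Scope R_scope.

(* Conjugating by [Rd], the attitude error [Q = Rd^T R] satisfies [dQ/dt = Q hat Omega] and
   stays in SO(3).  The energy [1/2 Omega^T J Omega + kR Psi] has derivative
   [- kOm |Omega|^2] while [Psi < 2]; the initial condition together with
   [Omega^T J Omega <= lambda_max |Omega|^2] makes the energy smaller than [2 kR], and since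
   [Psi <= energy / kR] the error [Psi] stays bounded away from [2] for all time.  Adding a small
   cross term [c <e_R, J Omega>] gives a Lyapunov function comparable to [|e_R|^2 + |Omega|^2]
   whose derivative is at most [- b (|e_R|^2 + |Omega|^2)], thanks to [|d e_R/dt| <= |Omega|/2];
   this yields the exponential decay.  The bounds [m |x|^2 <= x^T J x <= lambda_max |x|^2] come
   from the characteristic polynomial of the symmetric matrix [J]. *)

Notation n0 := 0%nat.
Notation n1 := 1%nat.
Notation n2 := 2%nat.

Ltac by_index := let i := fresh "i" in let Hi := fresh "Hi" in intros i Hi;
  destruct i as [|[|[|i]]]; [ | | | exfalso; lia].
Ltac by_indices := let i := fresh "i" in let j := fresh "j" in
  let Hi := fresh "Hi" in let Hj := fresh "Hj" in intros i j Hi Hj;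
  destruct i as [|[|[|i]]]; [ | | | exfalso; lia];
  destruct j as [|[|[|j]]]; try (exfalso; lia).

(** * Symmetric 3x3 matrices and their eigenvalues *)

Lemma vec_nonzero_iff (v : vec) : vec_nonzero v <-> ~ (v n0 = 0 /\ v n1 = 0 /\ v n2 = 0).
Proof.
  split.
  - intros [i [Hi Hv]] [H0 [H1 H2]]. destruct i as [|[|[|i]]]; try lia; auto.
  - intros H. destruct (Req_dec (v n0) 0); [destruct (Req_dec (v n1) 0);
      [destruct (Req_dec (v n2) 0) |] |].
    + tauto.
    + exists n2; split; [lia | auto].
    + exists n1; split; [lia | auto].
    + exists n0; split; [lia | auto].
Qed.

Lemma norm2_ge0 (x : vec) : 0 <= norm2 x.
Proof. unfold norm2, dot. nra. Qed.

Lemma norm2_gt0 (x : vec) : vec_nonzero x -> 0 < norm2 x.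
Proof.
  rewrite vec_nonzero_iff. intros Hx. unfold norm2, dot.
  destruct (Req_dec (x n0) 0); destruct (Req_dec (x n1) 0); destruct (Req_dec (x n2) 0);
    try tauto; nra.
Qed.

Definition row (A : mat) (i : nat) : vec := fun j => A i j.
Definition unit_vec (l : nat) : vec := fun i => if Nat.eqb i l then 1 else 0.

Ltac kernel_witness v := exists v; split;
  [ apply vec_nonzero_iff; try assumption;
    unfold v, cross, row, unit_vec; simpl; intros [? [? ?]]; lra
  | by_index; unfold mv, vzero, v, cross, row, unit_vec; simpl; lra ].

(* The cross products of pairs of rows lie in the kernel when [det3 A = 0]; if all of
   them vanish the rows are pairwise parallel and a cross product with a basis vector works. *)
Lemma det3_eq0_kernel (A : mat) :
  det3 A = 0 -> exists v, vec_nonzero v /\ vec_eq (mv A v) vzero.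
Proof.
  intros Hd. unfold det3 in Hd.
  set (c0 := cross (row A n1) (row A n2)).
  set (c1 := cross (row A n2) (row A n0)).
  set (c2 := cross (row A n0) (row A n1)).
  destruct (classic (c0 n0 = 0 /\ c0 n1 = 0 /\ c0 n2 = 0)) as [[? [? ?]] | Hc0];
    [| kernel_witness c0].
  destruct (classic (c1 n0 = 0 /\ c1 n1 = 0 /\ c1 n2 = 0)) as [[? [? ?]] | Hc1];
    [| kernel_witness c1].
  destruct (classic (c2 n0 = 0 /\ c2 n1 = 0 /\ c2 n2 = 0)) as [[? [? ?]] | Hc2];
    [| kernel_witness c2].
  unfold c0, c1, c2, cross, row in *; simpl in *.
  destruct (Req_dec (A n0 n0) 0); [| set (v := cross (row A n0) (unit_vec n1)); kernel_witness v].
  destruct (Req_dec (A n0 n1) 0); [| set (v := cross (row A n0) (unit_vec n2)); kernel_witness v].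
  destruct (Req_dec (A n0 n2) 0); [| set (v := cross (row A n0) (unit_vec n0)); kernel_witness v].
  destruct (Req_dec (A n1 n0) 0); [| set (v := cross (row A n1) (unit_vec n1)); kernel_witness v].
  destruct (Req_dec (A n1 n1) 0); [| set (v := cross (row A n1) (unit_vec n2)); kernel_witness v].
  destruct (Req_dec (A n1 n2) 0); [| set (v := cross (row A n1) (unit_vec n0)); kernel_witness v].
  destruct (Req_dec (A n2 n0) 0); [| set (v := cross (row A n2) (unit_vec n1)); kernel_witness v].
  destruct (Req_dec (A n2 n1) 0); [| set (v := cross (row A n2) (unit_vec n2)); kernel_witness v].
  destruct (Req_dec (A n2 n2) 0); [| set (v := cross (row A n2) (unit_vec n0)); kernel_witness v].
  set (v := unit_vec n0). kernel_witness v.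
Qed.

Definition adj3 (A : mat) : mat := fun i j => match j with
  | O => cross (row A n1) (row A n2) i
  | S O => cross (row A n2) (row A n0) i
  | _ => cross (row A n0) (row A n1) i end.

Lemma adj3_mv (A : mat) (v : vec) i : (i < 3)%nat -> mv (adj3 A) (mv A v) i = det3 A * v i.
Proof.
  intros Hi. destruct i as [|[|[|i]]]; try lia;
    unfold adj3, mv, cross, row, det3; simpl; ring.
Qed.

Lemma kernel_det3_eq0 (A : mat) (v : vec) :
  vec_nonzero v -> vec_eq (mv A v) vzero -> det3 A = 0.
Proof.
  rewrite vec_nonzero_iff. intros Hv Hk.
  assert (Hdv : forall i, (i < 3)%nat -> det3 A * v i = 0).
  { intros i Hi. rewrite <- adj3_mv by exact Hi. unfold mv at 1. rewrite !Hk by lia.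
    unfold vzero. ring. }
  destruct (Req_dec (det3 A) 0) as [| Hd]; auto.
  exfalso. apply Hv.
  repeat split; [ destruct (Rmult_integral _ _ (Hdv n0 ltac:(lia)))
                | destruct (Rmult_integral _ _ (Hdv n1 ltac:(lia)))
                | destruct (Rmult_integral _ _ (Hdv n2 ltac:(lia))) ]; tauto.
Qed.

Definition symmetric (N : mat) : Prop :=
  N n0 n1 = N n1 n0 /\ N n0 n2 = N n2 n0 /\ N n1 n2 = N n2 n1.

Definition shift (N : mat) (l : R) : mat := fun i j => N i j - l * idm i j.

Definition minor_sum (N : mat) : R :=
  N n0 n0 * N n1 n1 - N n0 n1 * N n1 n0 + N n0 n0 * N n2 n2 - N n0 n2 * N n2 n0
  + N n1 n1 * N n2 n2 - N n1 n2 * N n2 n1.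

Lemma det3_shift (N : mat) (l : R) :
  det3 (shift N l) = - (l * l * l) + trace N * (l * l) - minor_sum N * l + det3 N.
Proof. unfold det3, shift, idm, trace, minor_sum; simpl. ring. Qed.

Lemma shift_kernel_iff (N : mat) (l : R) (v : vec) :
  vec_eq (mv (shift N l) v) vzero <-> vec_eq (mv N v) (vscale l v).
Proof.
  split; intros H i Hi; specialize (H i Hi);
    unfold mv, shift, vzero, vscale, idm in *; destruct i as [|[|[|i]]]; simpl in *;
    try lia; lra.
Qed.

Lemma cubic_root_le (T S D nu : R) :
  - (nu * nu * nu) + T * (nu * nu) - S * nu + D <= 0 ->
  exists z, z <= nu /\ - (z * z * z) + T * (z * z) - S * z + D = 0.
Proof.
  intros Hnu.
  set (K := 1 + Rabs T + Rabs S + Rabs D + Rabs nu).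
  pose proof (Rabs_pos T); pose proof (Rabs_pos S); pose proof (Rabs_pos D);
    pose proof (Rabs_pos nu).
  pose proof (Rle_abs (- T)); pose proof (Rle_abs (- S)); pose proof (Rle_abs (- D));
    pose proof (Rle_abs (- nu)); rewrite !Rabs_Ropp in *.
  assert (HK : - K <= nu) by (unfold K; lra).
  (* [K^3 + T K^2 + S K + D >= K^2 (K - |T| - |S| - |D|) >= K^2] since [K >= 1]. *)
  assert (HfK : 0 < - (- K * - K * - K) + T * (- K * - K) - S * - K + D).
  { assert (HK1 : 1 <= K) by (unfold K; lra).
    assert (HK2 : K <= K * K) by nra.
    assert (Rabs S * K <= Rabs S * (K * K)) by nra.
    assert (Rabs D <= Rabs D * (K * K)) by nra.
    assert (HK3 : 1 <= K - Rabs T - Rabs S - Rabs D) by (unfold K; lra).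
    assert (K * K <= K * K * (K - Rabs T - Rabs S - Rabs D)) by nra.
    nra. }
  destruct (IVT_cor (fun l => - (l * l * l) + T * (l * l) - S * l + D) (- K) nu)
    as [z [Hz Hfz]]; auto.
  - intros l. reg.
  - nra.
  - exists z. split; [lra | exact Hfz].
Qed.

Lemma quadratic_form_2x2_nonneg (al ga b p q : R) :
  0 <= al -> 0 <= ga -> al * ga = b * b -> 0 <= al * (q * q) - 2 * b * p * q + ga * (p * p).
Proof.
  intros Hal Hga Hdet.
  destruct (Req_dec al 0) as [-> | Hal0].
  - assert (b = 0) by (apply Rsqr_0_uniq; unfold Rsqr; lra). subst b. nra.
  - assert (0 <= al * (al * (q * q) - 2 * b * p * q + ga * (p * p))).
    { replace (al * (al * (q * q) - 2 * b * p * q + ga * (p * p)))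
        with ((al * q - b * p) * (al * q - b * p) + (al * ga - b * b) * (p * p)) by ring.
      rewrite Hdet. pose proof (Rle_0_sqr (al * q - b * p)). unfold Rsqr in *. lra. }
    apply (Rmult_le_reg_l al); lra.
Qed.

(* The characteristic polynomial [det3 (shift N l)] is [<= 0] at the smaller eigenvalue [nu]
   of the upper-left 2x2 block, which is [<= N n0 n0 < 0], and tends to [+oo] at [-oo]. *)
Lemma symmetric_neg_diag_neg_eigenvalue (N : mat) :
  symmetric N -> N n0 n0 < 0 ->
  exists mu v, mu < 0 /\ vec_nonzero v /\ vec_eq (mv N v) (vscale mu v).
Proof.
  intros [S01 [S02 S12]] Ha.
  set (a := N n0 n0) in *. set (b := N n0 n1) in *. set (c := N n1 n1).
  set (p := N n0 n2) in *. set (q := N n1 n2) in *. set (d := N n2 n2).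
  set (r := sqrt ((a - c) * (a - c) + 4 * (b * b))).
  assert (Hdisc : 0 <= (a - c) * (a - c) + 4 * (b * b))
    by (pose proof (Rle_0_sqr (a - c)); pose proof (Rle_0_sqr b); unfold Rsqr in *; lra).
  assert (Hr2 : r * r = (a - c) * (a - c) + 4 * (b * b)) by (apply sqrt_sqrt; exact Hdisc).
  assert (Hrac : Rabs (a - c) <= r).
  { unfold r. rewrite <- sqrt_Rsqr_abs. apply sqrt_le_1_alt.
    pose proof (Rle_0_sqr b). unfold Rsqr in *. lra. }
  pose proof (Rle_abs (a - c)); pose proof (Rle_abs (- (a - c))); rewrite Rabs_Ropp in *.
  set (nu := (a + c - r) / 2).
  assert (Hal : 0 <= a - nu) by (unfold nu; lra).
  assert (Hga : 0 <= c - nu) by (unfold nu; lra).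
  assert (Hprod : (a - nu) * (c - nu) = b * b).
  { unfold nu. replace ((a - (a + c - r) / 2) * (c - (a + c - r) / 2))
      with ((r * r - (a - c) * (a - c)) / 4) by field.
    rewrite Hr2. field. }
  assert (Hfnu : det3 (shift N nu) <= 0).
  { replace (det3 (shift N nu))
      with (- ((a - nu) * (q * q) - 2 * b * p * q + (c - nu) * (p * p))
            + (d - nu) * ((a - nu) * (c - nu) - b * b))
      by (unfold det3, shift, idm; simpl; rewrite <- S01, <- S02, <- S12; fold a b c p q d; ring).
    rewrite Hprod. pose proof (quadratic_form_2x2_nonneg _ _ b p q Hal Hga Hprod). lra. }
  rewrite det3_shift in Hfnu.
  destruct (cubic_root_le _ _ _ _ Hfnu) as [z [Hz Hfz]].
  rewrite <- det3_shift in Hfz.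
  destruct (det3_eq0_kernel _ Hfz) as [v [Hv Hk]].
  exists z, v. repeat split; auto.
  - unfold nu in Hz. lra.
  - apply shift_kernel_iff. exact Hk.
Qed.

Lemma mv_mm (A B : mat) (x : vec) i : mv (mm A B) x i = mv A (mv B x) i.
Proof. unfold mv, mm. ring. Qed.

Lemma mv_ext_l (A B : mat) (x : vec) i :
  (forall j, (j < 3)%nat -> A i j = B i j) -> mv A x i = mv B x i.
Proof. intros H. unfold mv. rewrite !H by lia. reflexivity. Qed.

Lemma mv_ext_r (A : mat) (x y : vec) i : vec_eq x y -> mv A x i = mv A y i.
Proof. intros H. unfold mv. rewrite !H by lia. reflexivity. Qed.

Lemma mv_idm (x : vec) i : (i < 3)%nat -> mv idm x i = x i.
Proof. intros Hi. unfold mv, idm. destruct i as [|[|[|i]]]; simpl; try lia; ring. Qed.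

Lemma involution_mv (H : mat) (x : vec) i :
  mat_eq (mm H H) idm -> (i < 3)%nat -> mv H (mv H x) i = x i.
Proof.
  intros HH Hi. rewrite <- mv_mm, <- (mv_idm x i Hi).
  apply mv_ext_l. intros j Hj. apply HH; assumption.
Qed.

Lemma dot_mv_vscale (N : mat) (k : R) (x : vec) :
  dot (vscale k x) (mv N (vscale k x)) = k * k * dot x (mv N x).
Proof. unfold dot, mv, vscale. ring. Qed.

Lemma norm2_vscale (k : R) (x : vec) : norm2 (vscale k x) = k * k * norm2 x.
Proof. unfold norm2, dot, vscale. ring. Qed.

(* The reflection [H = I - 2 u u^T / |u|^2] with [u = y + e0]. *)
Lemma householder_to_e0 (y : vec) :
  norm2 y = 1 -> 0 <= y n0 ->
  exists H, symmetric H /\ mat_eq (mm H H) idm /\ forall i, (i < 3)%nat -> H i n0 = - y i.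
Proof.
  intros Hy1 Hy0.
  set (u := fun i => y i + unit_vec n0 i).
  assert (Huu : norm2 u = 2 * (1 + y n0)).
  { unfold u, norm2, dot, unit_vec; simpl. unfold norm2, dot in Hy1. lra. }
  exists (fun i j => idm i j - 2 * u i * u j / norm2 u). split; [| split].
  - unfold symmetric, idm; simpl. rewrite Huu. repeat split; field; lra.
  - by_indices; unfold mm, idm; simpl; unfold u, unit_vec, norm2, dot in *; simpl;
      field; lra.
  - rewrite Huu. by_index; unfold u, idm, unit_vec; simpl; unfold norm2, dot in Hy1; field; lra.
Qed.

Lemma symmetric_conj (H N : mat) : symmetric H -> symmetric N -> symmetric (mm H (mm N H)).
Proof.
  intros [H01 [H02 H12]] [N01 [N02 N12]].
  unfold symmetric, mm. rewrite H01, H02, H12, N01, N02, N12. repeat split; ring.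
Qed.

Lemma unit_vec_of_neg_form (N : mat) (x : vec) :
  dot x (mv N x) < 0 -> exists y, norm2 y = 1 /\ 0 <= y n0 /\ dot y (mv N y) < 0.
Proof.
  intros Hneg.
  assert (Hx : 0 < norm2 x).
  { apply norm2_gt0, vec_nonzero_iff. intros [Z0 [Z1 Z2]].
    unfold dot, mv in Hneg. rewrite Z0, Z1, Z2 in Hneg. lra. }
  set (n := sqrt (norm2 x)).
  assert (Hn : 0 < n) by (apply sqrt_lt_R0; exact Hx).
  assert (Hnn : n * n = norm2 x) by (apply sqrt_sqrt; lra).
  set (k := if Rle_dec 0 (x n0) then 1 / n else - (1 / n)).
  assert (Hkk : k * k * norm2 x = 1)
    by (unfold k; rewrite <- Hnn; destruct (Rle_dec 0 (x n0)); field; lra).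
  exists (vscale k x). rewrite norm2_vscale, dot_mv_vscale. split; [exact Hkk | split].
  - unfold vscale, k. destruct (Rle_dec 0 (x n0)).
    + apply Rmult_le_pos; [apply Rlt_le, Rdiv_lt_0_compat |]; lra.
    + assert (0 < 1 / n) by (apply Rdiv_lt_0_compat; lra). nra.
  - assert (0 < k * k) by nra. nra.
Qed.

(* A vector with negative Rayleigh quotient is reflected onto [e0]; the conjugated matrix then
   has a negative diagonal entry, hence a negative eigenvalue, which is also one of [N]. *)
Lemma symmetric_psd_of_eigenvalues_nonneg (N : mat) :
  symmetric N ->
  (forall mu v, vec_nonzero v -> vec_eq (mv N v) (vscale mu v) -> 0 <= mu) ->
  forall x, 0 <= dot x (mv N x).
Proof.
  intros HS Hev x. apply Rnot_lt_le. intros Hneg.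
  destruct (unit_vec_of_neg_form N x Hneg) as [y [Hy1 [Hy0 Hyneg]]].
  destruct (householder_to_e0 y Hy1 Hy0) as [H [HHs [HH Hcol]]].
  set (Np := mm H (mm N H)).
  assert (Hp00 : Np n0 n0 < 0).
  { destruct HHs as [H01 [H02 _]].
    replace (Np n0 n0) with (dot y (mv N y)); [exact Hyneg |].
    unfold Np, mm. rewrite H01, H02, !Hcol by lia. unfold dot, mv. ring. }
  destruct (symmetric_neg_diag_neg_eigenvalue Np (symmetric_conj _ _ HHs HS) Hp00)
    as [mu [v [Hmu [Hv Hevp]]]].
  set (w := mv H v).
  assert (Hw : vec_nonzero w).
  { apply vec_nonzero_iff. intros [W0 [W1 W2]]. apply vec_nonzero_iff in Hv. apply Hv.
    repeat split; rewrite <- (involution_mv H v) by (assumption || lia);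
      unfold mv at 1; fold w; rewrite W0, W1, W2; ring. }
  assert (Hew : vec_eq (mv N w) (vscale mu w)).
  { intros i Hi. rewrite <- (involution_mv H (mv N w) i HH Hi).
    transitivity (mv H (mv Np v) i).
    - unfold Np, w, mv, mm. ring.
    - rewrite (mv_ext_r _ _ _ _ Hevp). unfold w, mv, vscale. ring. }
  pose proof (Hev mu w Hw Hew). lra.
Qed.

Lemma rayleigh_ge_of_eigenvalues_ge (N : mat) (m : R) :
  symmetric N -> (forall l, is_eigenvalue N l -> m <= l) ->
  forall x, m * norm2 x <= dot x (mv N x).
Proof.
  intros [S01 [S02 S12]] Hm x.
  assert (HS : symmetric (shift N m))
    by (unfold symmetric, shift, idm; simpl; rewrite S01, S02, S12; repeat split; ring).
  assert (Hev : forall mu v, vec_nonzero v -> vec_eq (mv (shift N m) v) (vscale mu v) -> 0 <= mu).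
  { intros mu v Hv Hsv.
    assert (is_eigenvalue N (mu + m)).
    { exists v. split; [exact Hv |]. apply shift_kernel_iff. intros i Hi.
      specialize (Hsv i Hi). unfold mv, shift, vscale, vzero, idm in *.
      destruct i as [|[|[|i]]]; simpl in *; try lia; lra. }
    specialize (Hm _ H). lra. }
  pose proof (symmetric_psd_of_eigenvalues_nonneg _ HS Hev x).
  replace (dot x (mv (shift N m) x)) with (dot x (mv N x) - m * norm2 x) in H
    by (unfold shift, norm2, dot, mv, idm; simpl; ring).
  lra.
Qed.

Lemma sym_pos_def_symmetric (J : mat) : sym_pos_def J -> symmetric J.
Proof. intros [HT _]. unfold symmetric. repeat split; symmetry; apply HT; lia. Qed.

Lemma rayleigh_le_lambda_max (J : mat) (l : R) :
  symmetric J -> is_lambda_max J l -> forall x, dot x (mv J x) <= l * norm2 x.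
Proof.
  intros [S01 [S02 S12]] [_ Hmax] x.
  set (N := fun i j => - J i j).
  assert (HS : symmetric N) by (unfold symmetric, N; rewrite S01, S02, S12; auto).
  assert (Hev : forall mu, is_eigenvalue N mu -> - l <= mu).
  { intros mu [v [Hv He]].
    assert (is_eigenvalue J (- mu)).
    { exists v. split; [exact Hv |]. intros i Hi. specialize (He i Hi).
      unfold mv, vscale, N in *. lra. }
    specialize (Hmax _ H). lra. }
  pose proof (rayleigh_ge_of_eigenvalues_ge N (- l) HS Hev x).
  replace (dot x (mv N x)) with (- dot x (mv J x)) in H by (unfold N, dot, mv; ring).
  lra.
Qed.

Lemma eigenvalue_pos (J : mat) (l : R) : sym_pos_def J -> is_eigenvalue J l -> 0 < l.
Proof.
  intros [_ HP] [v [Hv He]]. specialize (HP v Hv).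
  replace (dot v (mv J v)) with (l * norm2 v) in HP
    by (unfold norm2, dot; rewrite !He by lia; unfold vscale; ring).
  pose proof (norm2_gt0 v Hv). nra.
Qed.

(* An eigenvalue [l < 1] is a root of the characteristic polynomial, so
   [|det J| = l * |l^2 - tr J * l + minor_sum J| <= l * (1 + |tr J| + |minor_sum J|)]. *)
Lemma eigenvalues_bounded_below (J : mat) :
  sym_pos_def J -> exists m, 0 < m /\ forall l, is_eigenvalue J l -> m <= l.
Proof.
  intros HJ.
  set (T := trace J). set (S := minor_sum J). set (D := det3 J).
  assert (HD : D <> 0).
  { intros Z. destruct (det3_eq0_kernel J Z) as [v [Hv Hk]].
    destruct HJ as [_ HP]. specialize (HP v Hv).
    replace (dot v (mv J v)) with 0 in HP by (unfold dot; rewrite !Hk by lia; unfold vzero; ring).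
    lra. }
  pose proof (Rabs_pos_lt D HD). pose proof (Rabs_pos T). pose proof (Rabs_pos S).
  exists (Rmin 1 (Rabs D / (1 + Rabs T + Rabs S))). split.
  { apply Rmin_pos; [lra |]. apply Rdiv_lt_0_compat; lra. }
  intros l Hl. pose proof (eigenvalue_pos J l HJ Hl) as Hlp.
  destruct (Rle_or_lt 1 l) as [L1 | L1].
  { pose proof (Rmin_l 1 (Rabs D / (1 + Rabs T + Rabs S))). lra. }
  destruct Hl as [v [Hv He]].
  assert (Hchar : D = l * (l * l - T * l + S)).
  { pose proof (kernel_det3_eq0 _ v Hv (proj2 (shift_kernel_iff J l v) He)) as Z.
    rewrite det3_shift in Z. fold T S D in Z. lra. }
  assert (B : Rabs (l * l - T * l + S) <= 1 + Rabs T + Rabs S).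
  { unfold Rminus. eapply Rle_trans; [apply Rabs_triang |].
    eapply Rle_trans; [apply Rplus_le_compat_r, Rabs_triang |].
    rewrite Rabs_Ropp, !Rabs_mult, (Rabs_right l) by lra. nra. }
  eapply Rle_trans; [apply Rmin_r |].
  apply (Rmult_le_reg_r (1 + Rabs T + Rabs S)); [lra |].
  unfold Rdiv. rewrite Rmult_assoc, Rinv_l by lra.
  rewrite Hchar, Rabs_mult, (Rabs_right l) by lra. nra.
Qed.

(** * Rotations *)

Ltac instantiate_index H :=
  pose proof (H n0 ltac:(lia)); pose proof (H n1 ltac:(lia)); pose proof (H n2 ltac:(lia)).

Ltac instantiate_indices H :=
  pose proof (H n0 n0 ltac:(lia) ltac:(lia)); pose proof (H n0 n1 ltac:(lia) ltac:(lia));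
  pose proof (H n0 n2 ltac:(lia) ltac:(lia)); pose proof (H n1 n0 ltac:(lia) ltac:(lia));
  pose proof (H n1 n1 ltac:(lia) ltac:(lia)); pose proof (H n1 n2 ltac:(lia) ltac:(lia));
  pose proof (H n2 n0 ltac:(lia) ltac:(lia)); pose proof (H n2 n1 ltac:(lia) ltac:(lia));
  pose proof (H n2 n2 ltac:(lia) ltac:(lia)).

Lemma sqr_eq0 (x : R) : x * x <= 0 -> x = 0.
Proof. intros H. apply Rsqr_0_uniq. pose proof (Rle_0_sqr x). unfold Rsqr in *. lra. Qed.

(* [|Q Q^T - I|_F^2 = |Q^T Q|_F^2 - 2 tr (Q^T Q) + 3] in terms of the entries of [Q^T Q]. *)
Lemma orthogonal_mm_transp (Q : mat) :
  mat_eq (mm (transp Q) Q) idm -> mat_eq (mm Q (transp Q)) idm.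
Proof.
  intros HG.
  set (P := mm Q (transp Q)). set (G := mm (transp Q) Q) in HG.
  assert (E : (P n0 n0 - 1) * (P n0 n0 - 1) + (P n1 n1 - 1) * (P n1 n1 - 1)
     + (P n2 n2 - 1) * (P n2 n2 - 1)
     + P n0 n1 * P n0 n1 + P n0 n2 * P n0 n2 + P n1 n0 * P n1 n0 + P n1 n2 * P n1 n2
     + P n2 n0 * P n2 n0 + P n2 n1 * P n2 n1
     = G n0 n0 * G n0 n0 + G n1 n1 * G n1 n1 + G n2 n2 * G n2 n2
     + G n0 n1 * G n0 n1 + G n0 n2 * G n0 n2 + G n1 n0 * G n1 n0 + G n1 n2 * G n1 n2
     + G n2 n0 * G n2 n0 + G n2 n1 * G n2 n1 - 2 * (G n0 n0 + G n1 n1 + G n2 n2) + 3)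
    by (unfold P, G, mm, transp; ring).
  rewrite !HG in E by lia. unfold idm in E; simpl in E.
  pose proof (Rle_0_sqr (P n0 n0 - 1)); pose proof (Rle_0_sqr (P n1 n1 - 1));
  pose proof (Rle_0_sqr (P n2 n2 - 1)); pose proof (Rle_0_sqr (P n0 n1));
  pose proof (Rle_0_sqr (P n0 n2)); pose proof (Rle_0_sqr (P n1 n0));
  pose proof (Rle_0_sqr (P n1 n2)); pose proof (Rle_0_sqr (P n2 n0));
  pose proof (Rle_0_sqr (P n2 n1)); unfold Rsqr in *.
  by_indices; unfold idm; simpl;
    first [apply sqr_eq0; lra | apply Rminus_diag_uniq, sqr_eq0; lra].
Qed.

Lemma so3_adj3 (Q : mat) : in_SO3 Q -> mat_eq (adj3 Q) (transp Q).
Proof.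
  intros [HO Hd]. pose proof (orthogonal_mm_transp Q HO) as HP.
  assert (E : mat_eq (mm (adj3 Q) (mm Q (transp Q))) (fun i j => det3 Q * Q j i))
    by (by_indices; unfold adj3, mm, transp, cross, row, det3; simpl; ring).
  intros i j Hi Hj. transitivity (mm (adj3 Q) (mm Q (transp Q)) i j).
  - unfold mm at 1. rewrite !HP by lia. unfold idm. destruct j as [|[|[|j]]]; simpl; try lia; ring.
  - rewrite E, Hd by assumption. unfold transp. ring.
Qed.

Ltac so3_facts HQ :=
  let HO := fresh "HO" in let HP := fresh "HP" in let HC := fresh "HC" in
  pose proof (proj1 HQ) as HO; pose proof (orthogonal_mm_transp _ HO) as HP;
  pose proof (so3_adj3 _ HQ) as HC;
  instantiate_indices HO; instantiate_indices HP; instantiate_indices HC; clear HO HP HC.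

Lemma det3_mm (A B : mat) : det3 (mm A B) = det3 A * det3 B.
Proof. unfold det3, mm. ring. Qed.

Lemma det3_transp (A : mat) : det3 (transp A) = det3 A.
Proof. unfold det3, transp. ring. Qed.

Lemma mm_idm_r (A P : mat) i j : mat_eq P idm -> (j < 3)%nat -> mm A P i j = A i j.
Proof.
  intros HP Hj. unfold mm. rewrite !HP by lia. unfold idm.
  destruct j as [|[|[|j]]]; simpl; try lia; ring.
Qed.

Lemma so3_transp_mm (A B : mat) : in_SO3 A -> in_SO3 B -> in_SO3 (mm (transp A) B).
Proof.
  intros [HOA HdA] [HOB HdB]. split.
  - pose proof (orthogonal_mm_transp A HOA) as HP. intros i j Hi Hj.
    transitivity (mm (mm (transp B) (mm A (transp A))) B i j); [unfold mm, transp; ring |].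
    rewrite <- (HOB i j Hi Hj). unfold mm at 1.
    rewrite !(mm_idm_r (transp B) (mm A (transp A))) by (assumption || lia). reflexivity.
  - rewrite det3_mm, det3_transp, HdA, HdB. ring.
Qed.

Definition axial (Q : mat) : vec := vee (msub Q (transp Q)).

Lemma norm2_axial (Q : mat) : in_SO3 Q -> norm2 (axial Q) = (3 - trace Q) * (1 + trace Q).
Proof.
  intros HQ. so3_facts HQ.
  unfold norm2, dot, axial, vee, msub, mm, transp, idm, adj3, cross, row, trace in *; simpl in *.
  lra.
Qed.

Lemma sqr_le1 (x : R) : x * x <= 1 -> x <= 1.
Proof. intros H. destruct (Rle_or_lt x 1); nra. Qed.

Lemma so3_trace_le3 (Q : mat) : in_SO3 Q -> trace Q <= 3.
Proof.
  intros HQ. so3_facts HQ. unfold mm, transp, idm, adj3, cross, row, trace in *; simpl in *.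
  pose proof (Rle_0_sqr (Q n1 n0)); pose proof (Rle_0_sqr (Q n2 n0));
  pose proof (Rle_0_sqr (Q n0 n1)); pose proof (Rle_0_sqr (Q n2 n1));
  pose proof (Rle_0_sqr (Q n0 n2)); pose proof (Rle_0_sqr (Q n1 n2)); unfold Rsqr in *.
  assert (Q n0 n0 <= 1) by (apply sqr_le1; lra).
  assert (Q n1 n1 <= 1) by (apply sqr_le1; lra).
  assert (Q n2 n2 <= 1) by (apply sqr_le1; lra).
  lra.
Qed.

Lemma so3_trace_ge_m1 (Q : mat) : in_SO3 Q -> -1 <= trace Q.
Proof.
  intros HQ. pose proof (norm2_axial Q HQ). pose proof (norm2_ge0 (axial Q)).
  pose proof (so3_trace_le3 Q HQ).
  destruct (Req_dec (trace Q) 3); [lra |]. nra.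
Qed.

Lemma axial_outer (Q : mat) : in_SO3 Q -> forall i j, (i < 3)%nat -> (j < 3)%nat ->
  axial Q i * axial Q j
  = (1 + trace Q) * ((1 - trace Q) * idm i j + 2 * Q i j - hat (axial Q) i j).
Proof.
  intros HQ. so3_facts HQ.
  by_indices; unfold axial, vee, msub, mm, transp, trace, idm, adj3, cross, row, hat in *;
    simpl in *; lra.
Qed.

Lemma trace_mm_hat (Q : mat) (w : vec) : trace (mm Q (hat w)) = - dot (axial Q) w.
Proof. unfold trace, mm, hat, dot, axial, vee, msub, transp; simpl. ring. Qed.

(* The attitude error [e_R = axial Q / (2 s)] with [s = sqrt (1 + tr Q)], and its time
   derivative along [dQ/dt = Q hat w], where [ds/dt = tr (Q hat w) / (2 s)]. *)
Definition eR_of (Q : mat) (s : R) : vec := vscale (1 / (2 * s)) (axial Q).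

Definition eR_rate (Q : mat) (w : vec) (s : R) : vec := fun i =>
  axial (mm Q (hat w)) i / (2 * s) - axial Q i * (trace (mm Q (hat w)) / (2 * s)) / (2 * (s * s)).

Lemma norm2_eR_of (Q : mat) (s : R) : in_SO3 Q -> 0 < s -> s * s = 1 + trace Q ->
  norm2 (eR_of Q s) = (2 - s) * (2 + s) / 4.
Proof.
  intros HQ Hs Hss. unfold eR_of. rewrite norm2_vscale, norm2_axial by exact HQ.
  replace (trace Q) with (s * s - 1) by lra. field. lra.
Qed.

Lemma lagrange_identity (x y : vec) : norm2 (cross x y) = norm2 x * norm2 y - dot x y * dot x y.
Proof. unfold norm2, dot, cross; simpl. ring. Qed.

Lemma eR_rate_scaled (Q : mat) (w : vec) (s : R) i :
  in_SO3 Q -> 0 < s -> s * s = 1 + trace Q -> (i < 3)%nat ->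
  4 * (s * s * s) * eR_rate Q w s i
  = (1 + trace Q) * ((1 + trace Q) * w i + cross (axial Q) w i).
Proof.
  intros HQ Hs Hss Hi.
  set (t := trace Q) in *. set (a := axial Q).
  replace (4 * (s * s * s) * eR_rate Q w s i)
    with (2 * (1 + t) * axial (mm Q (hat w)) i + a i * dot a w)
    by (unfold eR_rate; rewrite trace_mm_hat; fold a; rewrite <- Hss; field; lra).
  pose proof (axial_outer Q HQ) as K. fold a t in K.
  assert (K0 : w n0 * (a i * a n0 - (1 + t) * ((1 - t) * idm i n0 + 2 * Q i n0 - hat a i n0)) = 0)
    by (rewrite K by lia; ring).
  assert (K1 : w n1 * (a i * a n1 - (1 + t) * ((1 - t) * idm i n1 + 2 * Q i n1 - hat a i n1)) = 0)
    by (rewrite K by lia; ring).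
  assert (K2 : w n2 * (a i * a n2 - (1 + t) * ((1 - t) * idm i n2 + 2 * Q i n2 - hat a i n2)) = 0)
    by (rewrite K by lia; ring).
  unfold t, a in *.
  destruct i as [|[|[|i]]]; try lia;
    unfold dot, cross, axial, vee, msub, transp, mm, hat, idm, trace in *; simpl in *; lra.
Qed.

Lemma eR_rate_bound (Q : mat) (w : vec) (s : R) :
  in_SO3 Q -> 0 < s -> s * s = 1 + trace Q -> 4 * norm2 (eR_rate Q w s) <= norm2 w.
Proof.
  intros HQ Hs Hss.
  set (t := trace Q) in *.
  set (z := fun i => (1 + t) * w i + cross (axial Q) w i).
  assert (Hz : norm2 z <= 4 * (1 + t) * norm2 w).
  { replace (norm2 z) with ((1 + t) * (1 + t) * norm2 w + norm2 (cross (axial Q) w))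
      by (unfold z, norm2, dot, cross; simpl; ring).
    rewrite lagrange_identity, norm2_axial by exact HQ. fold t.
    pose proof (Rle_0_sqr (dot (axial Q) w)). pose proof (norm2_ge0 w).
    pose proof (so3_trace_ge_m1 Q HQ) as Ht. fold t in Ht. unfold Rsqr in *. nra. }
  assert (Hs3 : 0 < s * s * s) by (apply Rmult_lt_0_compat; [apply Rmult_lt_0_compat |]; auto).
  assert (E : 16 * (s * s * s) * (s * s * s) * norm2 (eR_rate Q w s) = (1 + t) * (1 + t) * norm2 z).
  { transitivity (norm2 (vscale (4 * (s * s * s)) (eR_rate Q w s)));
      [rewrite norm2_vscale; ring |].
    unfold norm2, dot, vscale; cbv beta. rewrite !eR_rate_scaled by (assumption || lia).
    unfold z, t; cbv beta. ring. }
  assert (0 <= (1 + t) * (1 + t)) by apply Rle_0_sqr.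
  assert (16 * (s * s * s) * (s * s * s) * norm2 (eR_rate Q w s)
          <= 4 * ((s * s * s) * (s * s * s)) * norm2 w).
  { rewrite E. replace (4 * ((s * s * s) * (s * s * s)) * norm2 w)
      with ((1 + t) * (1 + t) * (4 * (1 + t) * norm2 w)) by (rewrite <- Hss; ring).
    apply Rmult_le_compat_l; assumption. }
  assert (0 < (s * s * s) * (s * s * s)) by (apply Rmult_lt_0_compat; assumption).
  apply (Rmult_le_reg_l (4 * ((s * s * s) * (s * s * s)))); lra.
Qed.

(** * Calculus on the half-line [0, +oo) *)

Lemma deriv_plus f g t a b : derivable_pt_lim f t a -> derivable_pt_lim g t b ->
  derivable_pt_lim (fun s => f s + g s) t (a + b).
Proof. apply derivable_pt_lim_plus. Qed.

Lemma deriv_minus f g t a b : derivable_pt_lim f t a -> derivable_pt_lim g t b ->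
  derivable_pt_lim (fun s => f s - g s) t (a - b).
Proof. apply derivable_pt_lim_minus. Qed.

Lemma deriv_mult f g t a b : derivable_pt_lim f t a -> derivable_pt_lim g t b ->
  derivable_pt_lim (fun s => f s * g s) t (a * g t + f t * b).
Proof. apply derivable_pt_lim_mult. Qed.

Lemma deriv_opp f t a : derivable_pt_lim f t a -> derivable_pt_lim (fun s => - f s) t (- a).
Proof. apply derivable_pt_lim_opp. Qed.

Lemma deriv_inv f t a : derivable_pt_lim f t a -> f t <> 0 ->
  derivable_pt_lim (fun s => / f s) t (- a / (f t * f t)).
Proof.
  intros H Hn. pose (pr := exist (fun l => derivable_pt_lim f t l) a H : derivable_pt f t).
  apply (derive_pt_eq_1 (/ f)%F t _ (derivable_pt_inv f t Hn pr)).
  rewrite derive_pt_inv. reflexivity.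
Qed.

Lemma deriv_sqrt f t a : derivable_pt_lim f t a -> 0 < f t ->
  derivable_pt_lim (fun s => sqrt (f s)) t (/ (2 * sqrt (f t)) * a).
Proof.
  intros H Hp. apply (derivable_pt_lim_comp f sqrt); [exact H |].
  apply derivable_pt_lim_sqrt, Hp.
Qed.

Lemma deriv_exp f t a : derivable_pt_lim f t a ->
  derivable_pt_lim (fun s => exp (f s)) t (exp (f t) * a).
Proof. intros H. apply (derivable_pt_lim_comp f exp); [exact H | apply derivable_pt_lim_exp]. Qed.

Lemma deriv_eq f t a b : derivable_pt_lim f t a -> a = b -> derivable_pt_lim f t b.
Proof. intros H <-. exact H. Qed.

(* Computes a derivative syntactically; the derivatives of the leaves must be in the context,
   and side conditions (nonzero denominators, positive radicands) are left as goals. *)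
Ltac derive :=
  match goal with
  | |- derivable_pt_lim (fun s => ?c) _ _ => apply derivable_pt_lim_const
  | |- derivable_pt_lim (fun s => s) _ _ => apply derivable_pt_lim_id
  | |- derivable_pt_lim (fun s => @?f s + @?g s) _ _ => apply (deriv_plus f g); derive
  | |- derivable_pt_lim (fun s => @?f s - @?g s) _ _ => apply (deriv_minus f g); derive
  | |- derivable_pt_lim (fun s => @?f s * @?g s) _ _ => apply (deriv_mult f g); derive
  | |- derivable_pt_lim (fun s => - @?f s) _ _ => apply (deriv_opp f); derive
  | |- derivable_pt_lim (fun s => / @?f s) _ _ => apply (deriv_inv f); [derive |]
  | |- derivable_pt_lim (fun s => @?f s / @?g s) _ _ =>
       apply (deriv_mult f (fun s => / g s)); [derive | apply (deriv_inv g); [derive |]]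
  | |- derivable_pt_lim (fun s => sqrt (@?f s)) _ _ => apply (deriv_sqrt f); [derive |]
  | |- derivable_pt_lim (fun s => exp (@?f s)) _ _ => apply (deriv_exp f); derive
  | _ => eassumption
  end.

Definition cont_at (f : R -> R) (t : R) : Prop := limit1_in f (fun s => 0 <= s) (f t) t.

Lemma cont_at_of_cont_nonneg f t : 0 <= t -> cont_nonneg f -> cont_at f t.
Proof.
  intros Ht Hc eps Heps. destruct (Hc t Ht eps Heps) as [d [Hd H]].
  exists d. split; [exact Hd |]. intros x [Dx dx]. apply H; assumption.
Qed.

Lemma cont_at_elim f t eps : cont_at f t -> eps > 0 ->
  exists a, a > 0 /\ forall y, 0 <= y -> Rabs (y - t) < a -> Rabs (f y - f t) < eps.
Proof.
  intros H He. destruct (H eps He) as [a [Ha H']]. exists a. split; [exact Ha |].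
  intros y Hy Hyt. apply (H' y). split; assumption.
Qed.

Lemma cont_at_plus f g t : cont_at f t -> cont_at g t -> cont_at (fun s => f s + g s) t.
Proof. apply limit_plus. Qed.
Lemma cont_at_minus f g t : cont_at f t -> cont_at g t -> cont_at (fun s => f s - g s) t.
Proof. apply limit_minus. Qed.
Lemma cont_at_mult f g t : cont_at f t -> cont_at g t -> cont_at (fun s => f s * g s) t.
Proof. apply limit_mul. Qed.
Lemma cont_at_opp f t : cont_at f t -> cont_at (fun s => - f s) t.
Proof. apply limit_Ropp. Qed.
Lemma cont_at_const (c t : R) : cont_at (fun _ => c) t.
Proof. exact (limit_free (fun _ => c) _ 0 t). Qed.
Lemma cont_at_id t : cont_at (fun s => s) t.
Proof. apply lim_x. Qed.
Lemma cont_at_inv f t : cont_at f t -> f t <> 0 -> cont_at (fun s => / f s) t.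
Proof. apply limit_inv. Qed.

Lemma cont_at_comp f g t : cont_at f t -> continuity_pt g (f t) -> cont_at (fun s => g (f s)) t.
Proof.
  intros Hf Hg eps Heps.
  destruct (Hg eps Heps) as [a [Ha Hg']].
  destruct (Hf a Ha) as [b [Hb Hf']].
  exists b. split; [exact Hb |]. intros x [Dx dx].
  destruct (Req_dec (f x) (f t)) as [E | E].
  - simpl. rewrite E. unfold Rdist. rewrite Rminus_diag, Rabs_R0. exact Heps.
  - apply Hg'. split; [split; [constructor | auto] |]. apply Hf'. split; assumption.
Qed.

Lemma cont_at_sqrt f t : cont_at f t -> 0 <= f t -> cont_at (fun s => sqrt (f s)) t.
Proof.
  intros. apply (cont_at_comp f sqrt); [assumption | apply continuity_pt_sqrt; assumption].
Qed.

Lemma cont_at_exp f t : cont_at f t -> cont_at (fun s => exp (f s)) t.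
Proof.
  intros. apply (cont_at_comp f exp); [assumption |].
  apply derivable_continuous_pt, derivable_pt_exp.
Qed.

Lemma cont_at_div f g t :
  cont_at f t -> cont_at g t -> g t <> 0 -> cont_at (fun s => f s / g s) t.
Proof. intros. apply (cont_at_mult f (fun s => / g s)); [| apply cont_at_inv]; assumption. Qed.

(* Same convention as [derive]. *)
Ltac cont :=
  match goal with
  | |- cont_at (fun s => ?c) _ => apply cont_at_const
  | |- cont_at (fun s => s) _ => apply cont_at_id
  | |- cont_at (fun s => @?f s + @?g s) _ => apply (cont_at_plus f g); cont
  | |- cont_at (fun s => @?f s - @?g s) _ => apply (cont_at_minus f g); cont
  | |- cont_at (fun s => @?f s * @?g s) _ => apply (cont_at_mult f g); cont
  | |- cont_at (fun s => - @?f s) _ => apply (cont_at_opp f); cont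
  | |- cont_at (fun s => / @?f s) _ => apply (cont_at_inv f); [cont |]
  | |- cont_at (fun s => @?f s / @?g s) _ => apply (cont_at_div f g); [cont | cont |]
  | |- cont_at (fun s => sqrt (@?f s)) _ => apply (cont_at_sqrt f); [cont |]
  | |- cont_at (fun s => exp (@?f s)) _ => apply (cont_at_exp f); cont
  | _ => eassumption
  end.

Lemma nonincreasing_of_deriv_nonpos (f f' : R -> R) (y : R) :
  0 <= y -> cont_at f 0 ->
  (forall c, 0 < c <= y -> derivable_pt_lim f c (f' c)) ->
  (forall c, 0 < c <= y -> f' c <= 0) -> f y <= f 0.
Proof.
  intros Hy Hc Hd Hn.
  destruct Hy as [Hy | <-]; [| lra].
  (* mean value theorem on [e, y] for every [e > 0], then [e -> 0] by continuity *)
  assert (Step : forall e, 0 < e < y -> f y <= f e).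
  { intros e He. destruct (MVT_cor2 f f' e y) as [c [Hc1 Hc2]]; [lra | |].
    - intros c Hc'. apply Hd. lra.
    - assert (f' c <= 0) by (apply Hn; lra).
      assert (0 <= - f' c * (y - e)) by (apply Rmult_le_pos; lra). lra. }
  apply Rnot_lt_le. intros Hlt.
  destruct (cont_at_elim f 0 (f y - f 0) Hc ltac:(lra)) as [d [Hd0 Hd']].
  pose proof (Rmin_pos (d / 2) (y / 2) ltac:(lra) ltac:(lra)).
  pose proof (Rmin_l (d / 2) (y / 2)). pose proof (Rmin_r (d / 2) (y / 2)).
  set (e := Rmin (d / 2) (y / 2)) in *.
  assert (He : 0 < e < y) by lra.
  assert (Rabs (f e - f 0) < f y - f 0) by (apply Hd'; [lra | rewrite Rminus_0_r, Rabs_right; lra]).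
  pose proof (Rle_abs (f e - f 0)). pose proof (Step e He). lra.
Qed.

Lemma constant_of_deriv0 (f : R -> R) (y : R) : 0 <= y -> cont_at f 0 ->
  (forall c, 0 < c <= y -> derivable_pt_lim f c 0) -> f y = f 0.
Proof.
  intros Hy Hc Hd.
  pose proof (nonincreasing_of_deriv_nonpos f (fun _ => 0) y Hy Hc Hd ltac:(intros; lra)).
  pose proof (nonincreasing_of_deriv_nonpos (fun s => - f s) (fun _ => 0) y Hy
    (cont_at_opp f 0 Hc)
    ltac:(intros c Hc'; replace 0 with (- 0) by ring; apply deriv_opp, Hd, Hc')
    ltac:(intros; lra)).
  lra.
Qed.

Lemma exp_decay_of_deriv (V V' : R -> R) (a : R) :
  cont_at V 0 -> (forall c, 0 < c -> derivable_pt_lim V c (V' c)) ->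
  (forall c, 0 < c -> V' c + a * V c <= 0) ->
  forall t, 0 <= t -> V t <= V 0 * exp (- a * t).
Proof.
  intros Hc Hd Hn t Ht.
  assert (Hg : V t * exp (a * t) <= V 0 * exp (a * 0)).
  { apply (nonincreasing_of_deriv_nonpos (fun s => V s * exp (a * s))
             (fun s => (V' s + a * V s) * exp (a * s)) t Ht).
    - cont.
    - intros c Hc'. pose proof (Hd c ltac:(lra)). eapply deriv_eq; [derive | ring].
    - intros c Hc'. pose proof (Hn c ltac:(lra)). pose proof (exp_pos (a * c)). nra. }
  rewrite Rmult_0_r, exp_0, Rmult_1_r in Hg.
  replace (V t) with (V t * exp (a * t) * exp (- a * t))
    by (rewrite Rmult_assoc, <- exp_plus; replace (a * t + - a * t) with 0 by ring;
        rewrite exp_0; ring).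
  apply Rmult_le_compat_r; [left; apply exp_pos | exact Hg].
Qed.

(* Continuous induction through the supremum [T] of the times up to which [s > d / 2]:
   the hypothesis improves this to [s >= d] before [T], continuity carries it to [T] and
   slightly beyond, contradicting the choice of [T] unless [T] is the final time. *)
Lemma bootstrap (s : R -> R) (d : R) :
  0 < d -> (forall t, 0 <= t -> cont_at s t) -> d <= s 0 ->
  (forall T, 0 <= T -> (forall y, 0 <= y <= T -> d / 2 < s y) -> d <= s T) ->
  forall t, 0 <= t -> d <= s t.
Proof.
  intros Hd Hcs Hs0 Himp t1 Ht1.
  apply Rnot_lt_le. intros Hlt.
  set (B := fun x => 0 <= x <= t1 /\ forall y, 0 <= y <= x -> s y > d / 2).
  assert (HB0 : B 0).
  { split; [lra |]. intros y Hy. replace y with 0 by lra. lra. }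
  assert (Hbd : bound B) by (exists t1; intros x [Hx _]; lra).
  destruct (completeness B Hbd (ex_intro _ 0 HB0)) as [T [HTub HTl]].
  assert (HT0 : 0 <= T) by (apply HTub; exact HB0).
  assert (HTt1 : T <= t1) by (apply HTl; intros x [Hx _]; lra).
  assert (Hbelow : forall y, 0 <= y < T -> d <= s y).
  { intros y Hy. apply Himp; [lra |]. intros u Hu.
    destruct (classic (exists x, B x /\ y < x)) as [[x [[_ Hx] Hyx]] | N].
    - apply Hx. lra.
    - exfalso. assert (T <= y); [| lra].
      apply HTl. intros x Hx. destruct (Rle_or_lt x y); [assumption |]. exfalso; eauto. }
  assert (HsT : d <= s T).
  { destruct (Req_dec T 0) as [-> | Z]; [exact Hs0 |].
    apply Rnot_lt_le. intros HsTlt.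
    destruct (cont_at_elim s T (d - s T) (Hcs T HT0) ltac:(lra)) as [a [Ha Ha']].
    set (y := Rmax 0 (T - a / 2)).
    assert (HyT : 0 <= y < T) by (split; [apply Rmax_l | unfold y; apply Rmax_lub_lt; lra]).
    assert (Rabs (y - T) < a).
    { rewrite Rabs_left by lra. unfold y. pose proof (Rmax_r 0 (T - a / 2)). lra. }
    specialize (Ha' y ltac:(lra) ltac:(assumption)). pose proof (Hbelow y HyT).
    pose proof (Rle_abs (s y - s T)). lra. }
  assert (HTlt : T < t1) by (destruct (Req_dec T t1) as [-> | ]; lra).
  destruct (cont_at_elim s T (s T - d / 2) (Hcs T HT0) ltac:(lra)) as [a [Ha Ha']].
  set (x := Rmin (T + a / 2) t1).
  assert (HBx : B x).
  { split; [split; [unfold x; apply Rmin_glb; lra | apply Rmin_r] |].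
    intros y Hy. destruct (Rlt_or_le y T) as [Hy' | Hy'].
    - pose proof (Hbelow y ltac:(lra)). lra.
    - assert (Rabs (y - T) < a).
      { rewrite Rabs_right by lra. pose proof (Rmin_l (T + a / 2) t1). unfold x in Hy. lra. }
      specialize (Ha' y ltac:(lra) ltac:(assumption)).
      pose proof (Rle_abs (- (s y - s T))). rewrite Rabs_Ropp in *. lra. }
  pose proof (HTub x HBx). assert (T < x) by (unfold x; apply Rmin_glb_lt; lra). lra.
Qed.

(** * Lyapunov estimates *)

Lemma psd_form_polarization (J : mat) (a b : vec) :
  symmetric J -> (forall x, 0 <= dot x (mv J x)) ->
  2 * Rabs (dot a (mv J b)) <= dot a (mv J a) + dot b (mv J b).
Proof.
  intros [S01 [S02 S12]] HP.
  pose proof (HP (vsub a b)) as Hm. pose proof (HP (vadd a b)) as Hp.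
  replace (dot (vsub a b) (mv J (vsub a b)))
    with (dot a (mv J a) + dot b (mv J b) - 2 * dot a (mv J b)) in Hm
    by (unfold dot, mv, vsub; rewrite <- S01, <- S02, <- S12; ring).
  replace (dot (vadd a b) (mv J (vadd a b)))
    with (dot a (mv J a) + dot b (mv J b) + 2 * dot a (mv J b)) in Hp
    by (unfold dot, mv, vadd; rewrite <- S01, <- S02, <- S12; ring).
  unfold Rabs. destruct (Rcase_abs (dot a (mv J b))); lra.
Qed.

(* The Lyapunov function [V = 1/2 <w, J w> + kR Psi + c <e_R, J w>] and its derivative
   along the closed loop, where [ed = d e_R / dt] and [jd = J dw / dt]. *)
Definition lyap (J : mat) (kR c : R) (w e : vec) (s : R) : R :=
  dot w (mv J w) / 2 + kR * (2 - s) + c * dot e (mv J w).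

Definition lyap_rate (J : mat) (kR c : R) (w e ed jd : vec) : R :=
  dot w jd + kR * dot e w + c * (dot ed (mv J w) + dot e jd).

Section LyapunovEstimates.

Variables (J : mat) (L m kR kOm c : R).
Hypothesis HS : symmetric J.
Hypothesis Hup : forall x, dot x (mv J x) <= L * norm2 x.
Hypothesis Hlo : forall x, m * norm2 x <= dot x (mv J x).
Hypothesis HL : 0 < L.
Hypothesis Hm : 0 < m.
Hypothesis HkR : 0 < kR.
Hypothesis Hc : 0 < c.
Hypothesis Hc2 : c <= 1 / 2.
Hypothesis HcL : c * L <= kR.
Hypothesis HcA : c * (13 * L / 8 + kOm * kOm / (2 * kR)) <= kOm / 2.

Lemma form_nonneg (x : vec) : 0 <= dot x (mv J x).
Proof. pose proof (Hlo x). pose proof (norm2_ge0 x). nra. Qed.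

Lemma lyap_sandwich (w e : vec) (s : R) :
  (2 - s) / 2 <= norm2 e -> norm2 e <= 2 - s ->
  Rmin (m / 4) (kR / 2) * (norm2 w + norm2 e) <= lyap J kR c w e s
  <= (L + 3 * kR) * (norm2 w + norm2 e).
Proof.
  intros He1 He2.
  pose proof (form_nonneg w); pose proof (form_nonneg e).
  pose proof (psd_form_polarization J e w HS form_nonneg) as B.
  pose proof (Rle_abs (dot e (mv J w))); pose proof (Rle_abs (- dot e (mv J w)));
    rewrite Rabs_Ropp in *.
  pose proof (Hup e); pose proof (Hup w); pose proof (Hlo w).
  pose proof (norm2_ge0 w); pose proof (norm2_ge0 e).
  pose proof (Rmin_l (m / 4) (kR / 2)); pose proof (Rmin_r (m / 4) (kR / 2)).
  unfold lyap. split; nra.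
Qed.

Lemma lyap_rate_bound (w e ed jd : vec) :
  norm2 e <= 1 -> 4 * norm2 ed <= norm2 w ->
  (forall i, (i < 3)%nat -> jd i = - kR * e i - kOm * w i - cross w (mv J w) i) ->
  lyap_rate J kR c w e ed jd <= - (kOm / 2) * norm2 w - (c * kR / 2) * norm2 e.
Proof.
  intros He1 Hed Hjd. unfold lyap_rate.
  assert (Ew : dot w jd = - kR * dot e w - kOm * norm2 w)
    by (unfold dot at 1; rewrite !Hjd by lia; unfold norm2, dot, cross; simpl; ring).
  assert (Ee : dot e jd = - kR * norm2 e - kOm * dot e w - dot (cross e w) (mv J w))
    by (unfold dot at 1; rewrite !Hjd by lia; unfold norm2, dot, cross; simpl; ring).
  rewrite Ew, Ee.
  pose proof (psd_form_polarization J ed w HS form_nonneg).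
  pose proof (psd_form_polarization J (cross e w) w HS form_nonneg).
  pose proof (Rle_abs (dot ed (mv J w))).
  pose proof (Rle_abs (- dot (cross e w) (mv J w))); rewrite Rabs_Ropp in *.
  pose proof (Hup ed); pose proof (Hup w); pose proof (Hup (cross e w)).
  pose proof (norm2_ge0 w); pose proof (norm2_ge0 e).
  assert (Hx : norm2 (cross e w) <= norm2 w)
    by (rewrite lagrange_identity; pose proof (Rle_0_sqr (dot e w)); unfold Rsqr in *; nra).
  assert (X1 : dot ed (mv J w) <= 5 * L / 8 * norm2 w) by nra.
  assert (X2 : - dot (cross e w) (mv J w) <= L * norm2 w) by nra.
  (* Young's inequality [- kOm <e, w> <= kR/2 |e|^2 + kOm^2 / (2 kR) |w|^2] *)
  assert (X3 : - kOm * dot e w <= kR / 2 * norm2 e + kOm * kOm / (2 * kR) * norm2 w).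
  { pose proof (norm2_ge0 (vadd (vscale kR e) (vscale kOm w))) as N.
    replace (norm2 (vadd (vscale kR e) (vscale kOm w)))
      with (kR * kR * norm2 e + 2 * kR * kOm * dot e w + kOm * kOm * norm2 w) in N
      by (unfold norm2, dot, vadd, vscale; ring).
    apply (Rmult_le_reg_l (2 * kR)); [lra |].
    replace (2 * kR * (kR / 2 * norm2 e + kOm * kOm / (2 * kR) * norm2 w))
      with (kR * kR * norm2 e + kOm * kOm * norm2 w) by (field; lra).
    lra. }
  assert (c * (dot ed (mv J w) - kR * norm2 e - kOm * dot e w - dot (cross e w) (mv J w))
          <= c * ((13 * L / 8 + kOm * kOm / (2 * kR)) * norm2 w - kR / 2 * norm2 e))
    by (apply Rmult_le_compat_l; lra).
  assert (c * (13 * L / 8 + kOm * kOm / (2 * kR)) * norm2 w <= kOm / 2 * norm2 w)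
    by (apply Rmult_le_compat_r; assumption).
  lra.
Qed.

End LyapunovEstimates.

Lemma lyap_gain_exists (L kR kOm : R) : 0 < L -> 0 < kR -> 0 < kOm ->
  exists c, 0 < c /\ c <= 1 / 2 /\ c * L <= kR
            /\ c * (13 * L / 8 + kOm * kOm / (2 * kR)) <= kOm / 2.
Proof.
  intros HL HkR HkO.
  set (A := 13 * L / 8 + kOm * kOm / (2 * kR)).
  assert (HA : 0 < A) by (unfold A; assert (0 < kOm * kOm / (2 * kR)) by
    (apply Rdiv_lt_0_compat; nra); lra).
  exists (Rmin (Rmin (1 / 2) (kR / L)) (kOm / (2 * A))).
  pose proof (Rmin_l (Rmin (1 / 2) (kR / L)) (kOm / (2 * A))).
  pose proof (Rmin_r (Rmin (1 / 2) (kR / L)) (kOm / (2 * A))).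
  pose proof (Rmin_l (1 / 2) (kR / L)); pose proof (Rmin_r (1 / 2) (kR / L)).
  set (c := Rmin (Rmin (1 / 2) (kR / L)) (kOm / (2 * A))) in *.
  assert (0 < c) by (unfold c; repeat apply Rmin_pos; try apply Rdiv_lt_0_compat; lra).
  repeat split; try lra.
  - apply (Rmult_le_reg_r (/ L)); [apply Rinv_0_lt_compat; lra |].
    rewrite Rmult_assoc, Rinv_r by lra. unfold Rdiv in *. lra.
  - apply (Rmult_le_reg_r (/ A)); [apply Rinv_0_lt_compat; lra |].
    rewrite Rmult_assoc, Rinv_r by lra. unfold Rdiv in *.
    rewrite Rinv_mult in *. lra.
Qed.

(** * The closed loop *)

Lemma sqrt_pos_inv (x : R) : 0 < sqrt x -> 0 < x.
Proof. intros H. destruct (Rle_or_lt x 0) as [H' | H']; [rewrite sqrt_neg_0 in H |]; lra. Qed.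

Definition decay_constant (L m kR : R) : R := (L + 3 * kR) / Rmin (m / 4) (kR / 2).

Definition decay_rate (L kR kOm c : R) : R := Rmin (kOm / 2) (c * kR / 2) / (L + 3 * kR).

Lemma norm2_e_Omega_zero (Rm Rd : mat) (w : vec) : norm2 (e_Omega Rm Rd w vzero) = norm2 w.
Proof. unfold norm2, dot, e_Omega, vsub, mv, vzero. ring. Qed.

Section ClosedLoop.

Variables (J : mat) (kR kOm : R) (Rd : mat) (Rt : R -> mat) (Om dOm : R -> vec).
Hypothesis Hsol : closed_loop_solution J kR kOm Rd Rt Om dOm.
Hypothesis HRd : in_SO3 Rd.
Hypothesis HR0 : in_SO3 (Rt 0).

Definition att (s : R) : mat := mm (transp Rd) (Rt s).

(* [trace_root s = 2 - Psi (Rt s) Rd]. *)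
Definition trace_root (s : R) : R := sqrt (1 + trace (att s)).

Definition eR (s : R) : vec := eR_of (att s) (trace_root s).

Lemma att_deriv t : 0 < t -> forall i j, (i < 3)%nat -> (j < 3)%nat ->
  derivable_pt_lim (fun s => att s i j) t (mm (att t) (hat (Om t)) i j).
Proof.
  intros Ht i j Hi Hj. destruct Hsol as [_ [_ HD]]. destruct (HD t Ht) as [HR _].
  pose proof (HR n0 j ltac:(lia) Hj); pose proof (HR n1 j ltac:(lia) Hj);
    pose proof (HR n2 j ltac:(lia) Hj).
  unfold att, mm at 1, transp. eapply deriv_eq; [derive | unfold mm; ring].
Qed.

Lemma att_cont t : 0 <= t -> forall i j, (i < 3)%nat -> (j < 3)%nat ->
  cont_at (fun s => att s i j) t.
Proof.
  intros Ht i j Hi Hj. destruct Hsol as [HC _].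
  pose proof (fun k Hk => cont_at_of_cont_nonneg _ t Ht (HC k j Hk Hj)) as HRj.
  instantiate_index HRj. unfold att, mm, transp. cont.
Qed.

Lemma Om_cont t : 0 <= t -> forall i, (i < 3)%nat -> cont_at (fun s => Om s i) t.
Proof. intros Ht i Hi. destruct Hsol as [_ [HC _]]. apply cont_at_of_cont_nonneg; auto. Qed.

Lemma Om_deriv t : 0 < t -> forall i, (i < 3)%nat ->
  derivable_pt_lim (fun s => Om s i) t (dOm t i).
Proof. intros Ht i Hi. destruct Hsol as [_ [_ HD]]. apply (HD t Ht); assumption. Qed.

(* [Q Q^T] and [det Q] have zero derivative since [dQ/dt = Q hat w] with [hat w] skew. *)
Lemma att_in_SO3 t : 0 <= t -> in_SO3 (att t).
Proof.
  intros Ht.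
  pose proof (so3_transp_mm Rd (Rt 0) HRd HR0) as [HO0 Hd0].
  pose proof (orthogonal_mm_transp _ HO0) as HP0.
  pose proof (att_cont 0 ltac:(lra)) as HC.
  assert (HP : mat_eq (mm (att t) (transp (att t))) idm).
  { intros i j Hi Hj. rewrite <- (HP0 i j Hi Hj).
    apply (constant_of_deriv0 (fun s => mm (att s) (transp (att s)) i j) t Ht).
    - pose proof (HC i n0 Hi ltac:(lia)); pose proof (HC i n1 Hi ltac:(lia));
        pose proof (HC i n2 Hi ltac:(lia)); pose proof (HC j n0 Hj ltac:(lia));
        pose proof (HC j n1 Hj ltac:(lia)); pose proof (HC j n2 Hj ltac:(lia)).
      unfold mm at 1, transp. cont.
    - intros c Hc. pose proof (att_deriv c ltac:(lra)) as HD.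
      pose proof (HD i n0 Hi ltac:(lia)); pose proof (HD i n1 Hi ltac:(lia));
        pose proof (HD i n2 Hi ltac:(lia)); pose proof (HD j n0 Hj ltac:(lia));
        pose proof (HD j n1 Hj ltac:(lia)); pose proof (HD j n2 Hj ltac:(lia)).
      unfold mm at 1, transp. eapply deriv_eq; [derive | unfold mm, hat; simpl; ring]. }
  split.
  - exact (orthogonal_mm_transp (transp (att t)) HP).
  - rewrite <- Hd0. apply (constant_of_deriv0 (fun s => det3 (att s)) t Ht).
    + instantiate_indices HC. unfold det3. cont.
    + intros c Hc. pose proof (att_deriv c ltac:(lra)) as HD. instantiate_indices HD.
      unfold det3. eapply deriv_eq; [derive | unfold mm, hat; simpl; ring].
Qed.

Lemma e_R_eR t i : e_R (Rt t) Rd i = eR t i.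
Proof.
  unfold e_R, eR, eR_of, trace_root, att, axial, vscale, vee, msub, transp, mm, trace.
  destruct i as [|[|i]]; simpl; ring.
Qed.

Lemma norm2_e_R t : norm2 (e_R (Rt t) Rd) = norm2 (eR t).
Proof. unfold norm2, dot. rewrite !e_R_eR. reflexivity. Qed.

Lemma closed_loop_eq t : 0 < t -> forall i, (i < 3)%nat ->
  mv J (dOm t) i = - kR * eR t i - kOm * Om t i - cross (Om t) (mv J (Om t)) i.
Proof.
  intros Ht i Hi. destruct Hsol as [_ [_ HD]]. destruct (HD t Ht) as [_ [_ HE]].
  specialize (HE i Hi). unfold vadd, control, e_Omega, vsub, vscale, vzero in HE.
  rewrite e_R_eR in HE. unfold mv in *. lra.
Qed.

Lemma trace_root_sqr t : 0 <= t -> trace_root t * trace_root t = 1 + trace (att t).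
Proof.
  intros Ht. pose proof (so3_trace_ge_m1 _ (att_in_SO3 t Ht)).
  apply sqrt_sqrt. lra.
Qed.

Lemma trace_root_le2 t : 0 <= t -> trace_root t <= 2.
Proof.
  intros Ht. pose proof (so3_trace_le3 _ (att_in_SO3 t Ht)). unfold trace_root.
  rewrite <- (sqrt_square 2) by lra. apply sqrt_le_1_alt. lra.
Qed.

Lemma trace_root_deriv t : 0 < t -> 0 < trace_root t ->
  derivable_pt_lim trace_root t (- dot (eR t) (Om t)).
Proof.
  intros Ht Hs. pose proof (sqrt_pos_inv _ Hs). unfold trace_root, trace in *.
  pose proof (att_deriv t Ht) as HD. instantiate_indices HD.
  eapply deriv_eq; [derive; lra |].
  unfold eR, eR_of, trace_root, dot, vscale, axial, vee, msub, transp, mm, hat, trace; simpl.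
  set (s := sqrt _) in *. field. lra.
Qed.

Lemma eR_deriv t : 0 < t -> 0 < trace_root t -> forall i, (i < 3)%nat ->
  derivable_pt_lim (fun s => eR s i) t (eR_rate (att t) (Om t) (trace_root t) i).
Proof.
  intros Ht Hs i Hi. pose proof (sqrt_pos_inv _ Hs). unfold trace_root, trace in *.
  pose proof (att_deriv t Ht) as HD. instantiate_indices HD.
  destruct i as [|[|[|i]]]; try lia;
    unfold eR, eR_of, vscale, axial, vee, msub, transp, trace_root, trace; simpl;
    (eapply deriv_eq; [derive; first [lra | intro; lra] |]);
    unfold eR_rate, axial, vee, msub, transp, mm, hat, trace; simpl;
    set (s := sqrt _) in *; field; lra.
Qed.

Lemma trace_root_cont t : 0 <= t -> cont_at trace_root t.
Proof.
  intros Ht. pose proof (so3_trace_ge_m1 _ (att_in_SO3 t Ht)).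
  pose proof (att_cont t Ht) as HC. instantiate_indices HC.
  unfold trace_root, trace in *. cont. lra.
Qed.

Section Lyapunov.

Variable c : R.

Definition lyap_traj (s : R) : R := lyap J kR c (Om s) (eR s) (trace_root s).

Lemma lyap_traj_cont t : 0 <= t -> 0 < trace_root t -> cont_at lyap_traj t.
Proof.
  intros Ht Hs. pose proof (sqrt_pos_inv _ Hs) as Hp.
  pose proof (Om_cont t Ht) as HO. instantiate_index HO.
  pose proof (att_cont t Ht) as HQ. instantiate_indices HQ.
  unfold lyap_traj, lyap, dot, mv, eR, eR_of, vscale, axial, vee, msub, transp, trace_root,
    trace in *; simpl.
  cont; first [lra | intro; lra].
Qed.

Lemma lyap_traj_deriv t : symmetric J -> 0 < t -> 0 < trace_root t ->
  derivable_pt_lim lyap_traj t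
    (lyap_rate J kR c (Om t) (eR t) (eR_rate (att t) (Om t) (trace_root t)) (mv J (dOm t))).
Proof.
  intros [S01 [S02 S12]] Ht Hs.
  pose proof (Om_deriv t Ht) as HO. instantiate_index HO.
  pose proof (eR_deriv t Ht Hs) as HE. instantiate_index HE.
  pose proof (trace_root_deriv t Ht Hs).
  unfold lyap_traj, lyap, dot, mv. eapply deriv_eq; [derive; cbv beta; lra |].
  unfold lyap_rate, dot, mv. rewrite <- S01, <- S02, <- S12. field.
Qed.

End Lyapunov.

Lemma eR_norm_bounds t : 0 <= t -> 0 < trace_root t ->
  (2 - trace_root t) / 2 <= norm2 (eR t) <= 2 - trace_root t /\ norm2 (eR t) <= 1.
Proof.
  intros Ht Hs. pose proof (trace_root_le2 t Ht).
  unfold eR. rewrite norm2_eR_of by auto using att_in_SO3, trace_root_sqr. nra.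
Qed.

Lemma lyap_rate_without_cross t ed : 0 < t ->
  lyap_rate J kR 0 (Om t) (eR t) ed (mv J (dOm t)) = - kOm * norm2 (Om t).
Proof.
  intros Ht. unfold lyap_rate. unfold dot at 1. rewrite !closed_loop_eq by (assumption || lia).
  unfold norm2, dot, cross, mv; simpl. ring.
Qed.

(* With [c = 0] the Lyapunov function is the energy [1/2 <w, J w> + kR Psi], which is
   nonincreasing as long as [Psi < 2]; since [Psi <= energy / kR], this keeps [Psi] away
   from [2]. *)
Lemma trace_root_bounded_below (L : R) :
  symmetric J -> (forall x, 0 <= dot x (mv J x)) -> (forall x, dot x (mv J x) <= L * norm2 x) ->
  0 < L -> 0 < kR -> 0 < kOm -> 0 < trace_root 0 ->
  norm2 (Om 0) < 2 * kR / L * trace_root 0 ->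
  exists d, 0 < d /\ forall t, 0 <= t -> d <= trace_root t.
Proof.
  intros HS Hpsd Hup HL HkR HkO Hs0 HOm0.
  set (V := lyap_traj 0).
  assert (HV : forall t, kR * (2 - trace_root t) <= V t)
    by (intros t; pose proof (Hpsd (Om t)); unfold V, lyap_traj, lyap; lra).
  assert (Hd : 0 < 2 - V 0 / kR).
  { assert (V 0 < 2 * kR); [| apply (Rmult_lt_reg_l kR); [lra | field_simplify; lra]].
    pose proof (Hup (Om 0)).
    assert (L * norm2 (Om 0) < 2 * kR * trace_root 0).
    { apply (Rmult_lt_compat_l L) in HOm0; [| exact HL].
      replace (L * (2 * kR / L * trace_root 0)) with (2 * kR * trace_root 0) in HOm0
        by (field; lra). exact HOm0. }
    unfold V, lyap_traj, lyap. lra. }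
  exists (2 - V 0 / kR). split; [exact Hd |].
  apply bootstrap; [exact Hd | exact trace_root_cont | |].
  - pose proof (HV 0). apply (Rmult_le_reg_l kR); [lra |]. field_simplify; lra.
  - intros T HT Hpos. pose proof (HV T).
    assert (V T <= V 0).
    { apply (nonincreasing_of_deriv_nonpos V (fun s => - kOm * norm2 (Om s)) T HT).
      - apply lyap_traj_cont; lra.
      - intros c' Hc'.
        rewrite <- (lyap_rate_without_cross c' (eR_rate (att c') (Om c') (trace_root c'))) by lra.
        apply lyap_traj_deriv; [exact HS | lra |]. pose proof (Hpos c' ltac:(lra)). lra.
      - intros c' _. pose proof (norm2_ge0 (Om c')). nra. }
    apply (Rmult_le_reg_l kR); [lra |]. field_simplify; lra.
Qed.

Section Decay.

Variables (L m c : R).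
Hypothesis HS : symmetric J.
Hypothesis Hup : forall x, dot x (mv J x) <= L * norm2 x.
Hypothesis Hlo : forall x, m * norm2 x <= dot x (mv J x).
Hypothesis HL : 0 < L.
Hypothesis Hm : 0 < m.
Hypothesis HkR : 0 < kR.
Hypothesis HkO : 0 < kOm.
Hypothesis Hc : 0 < c.
Hypothesis Hc2 : c <= 1 / 2.
Hypothesis HcL : c * L <= kR.
Hypothesis HcA : c * (13 * L / 8 + kOm * kOm / (2 * kR)) <= kOm / 2.
Hypothesis Htr : forall t, 0 <= t -> 0 < trace_root t.

Lemma lyap_traj_sandwich t : 0 <= t ->
  Rmin (m / 4) (kR / 2) * (norm2 (Om t) + norm2 (eR t)) <= lyap_traj c t
  <= (L + 3 * kR) * (norm2 (Om t) + norm2 (eR t)).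
Proof.
  intros Ht. destruct (eR_norm_bounds t Ht (Htr t Ht)) as [[He1 He2] _].
  apply lyap_sandwich; assumption.
Qed.

Lemma lyap_traj_rate_bound t : 0 < t ->
  lyap_rate J kR c (Om t) (eR t) (eR_rate (att t) (Om t) (trace_root t)) (mv J (dOm t))
  <= - Rmin (kOm / 2) (c * kR / 2) * (norm2 (Om t) + norm2 (eR t)).
Proof.
  intros Ht.
  destruct (eR_norm_bounds t ltac:(lra) (Htr t ltac:(lra))) as [_ He].
  pose proof (eR_rate_bound (att t) (Om t) (trace_root t) (att_in_SO3 t ltac:(lra))
    (Htr t ltac:(lra)) (trace_root_sqr t ltac:(lra))).
  pose proof (lyap_rate_bound J L m kR kOm c HS Hup Hlo HL Hm HkR Hc HcA
    (Om t) (eR t) _ _ He H (closed_loop_eq t Ht)).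
  pose proof (Rmin_l (kOm / 2) (c * kR / 2)); pose proof (Rmin_r (kOm / 2) (c * kR / 2)).
  pose proof (norm2_ge0 (Om t)); pose proof (norm2_ge0 (eR t)). nra.
Qed.

Lemma closed_loop_exp_decay t : 0 <= t ->
  norm2 (eR t) + norm2 (Om t)
  <= decay_constant L m kR * (norm2 (eR 0) + norm2 (Om 0)) * exp (- decay_rate L kR kOm c * t).
Proof.
  intros Ht. rewrite !(Rplus_comm (norm2 (eR _))).
  pose proof (Rmin_pos (m / 4) (kR / 2) ltac:(lra) ltac:(lra)).
  pose proof (lyap_traj_sandwich t Ht) as [Hlow _].
  pose proof (lyap_traj_sandwich 0 ltac:(lra)) as [_ Hup0].
  assert (Hdec : lyap_traj c t <= lyap_traj c 0 * exp (- decay_rate L kR kOm c * t)).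
  { apply (exp_decay_of_deriv _ (fun s => lyap_rate J kR c (Om s) (eR s)
            (eR_rate (att s) (Om s) (trace_root s)) (mv J (dOm s)))); [| | | exact Ht].
    - apply lyap_traj_cont; [lra | apply Htr; lra].
    - intros s Hs. apply lyap_traj_deriv; [exact HS | exact Hs | apply Htr; lra].
    - intros s Hs. pose proof (lyap_traj_rate_bound s Hs).
      pose proof (lyap_traj_sandwich s ltac:(lra)) as [_ HU].
      unfold decay_rate. cbv beta.
      set (b := Rmin (kOm / 2) (c * kR / 2)) in *.
      assert (b / (L + 3 * kR) * lyap_traj c s <= b * (norm2 (Om s) + norm2 (eR s))).
      { unfold Rdiv. rewrite Rmult_assoc. apply Rmult_le_compat_l.
        - unfold b. apply Rlt_le, Rmin_pos; nra.
        - apply (Rmult_le_reg_l (L + 3 * kR)); [lra |].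
          rewrite <- Rmult_assoc, Rinv_r, Rmult_1_l by lra. exact HU. }
      lra. }
  pose proof (exp_pos (- decay_rate L kR kOm c * t)).
  unfold decay_constant.
  apply (Rmult_le_reg_l (Rmin (m / 4) (kR / 2))); [assumption |].
  replace (Rmin (m / 4) (kR / 2) * ((L + 3 * kR) / Rmin (m / 4) (kR / 2)
            * (norm2 (Om 0) + norm2 (eR 0)) * exp (- decay_rate L kR kOm c * t)))
    with ((L + 3 * kR) * (norm2 (Om 0) + norm2 (eR 0)) * exp (- decay_rate L kR kOm c * t))
    by (field; lra).
  apply (Rle_trans _ _ _ Hlow), (Rle_trans _ _ _ Hdec), Rmult_le_compat_r; lra.
Qed.

End Decay.

End ClosedLoop.

Theorem proposition4 :
  forall (J : mat) (lmax kR kOm : R),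
    sym_pos_def J -> is_lambda_max J lmax -> kR > 0 -> kOm > 0 ->
    exists C beta : R, C > 0 /\ beta > 0 /\
      forall (Rd : mat) (Rt : R -> mat) (Om dOm : R -> vec),
        in_SO3 Rd -> in_SO3 (Rt 0) ->
        closed_loop_solution J kR kOm Rd Rt Om dOm ->
        Psi (Rt 0) Rd < 2 ->
        norm2 (Om 0) < 2 * kR / lmax * (2 - Psi (Rt 0) Rd) ->
        (forall t, 0 <= t -> Psi (Rt t) Rd < 2) /\
        (forall t, 0 <= t ->
           norm2 (e_R (Rt t) Rd) + norm2 (e_Omega (Rt t) Rd (Om t) vzero)
           <= C * (norm2 (e_R (Rt 0) Rd) + norm2 (e_Omega (Rt 0) Rd (Om 0) vzero))
              * exp (- beta * t)).
Proof.
  intros J lmax kR kOm HJ Hl HkR HkO.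
  pose proof (sym_pos_def_symmetric J HJ) as HS.
  pose proof (eigenvalue_pos J lmax HJ (proj1 Hl)) as HL.
  pose proof (rayleigh_le_lambda_max J lmax HS Hl) as Hup.
  destruct (eigenvalues_bounded_below J HJ) as [m [Hm Heig]].
  pose proof (rayleigh_ge_of_eigenvalues_ge J m HS Heig) as Hlo.
  destruct (lyap_gain_exists lmax kR kOm HL HkR HkO) as [c [Hc [Hc2 [HcL HcA]]]].
  pose proof (Rmin_pos (m / 4) (kR / 2) ltac:(lra) ltac:(lra)).
  pose proof (Rmin_pos (kOm / 2) (c * kR / 2) ltac:(lra) ltac:(nra)).
  exists (decay_constant lmax m kR), (decay_rate lmax kR kOm c).
  split; [apply Rdiv_lt_0_compat; lra |]. split; [apply Rdiv_lt_0_compat; lra |].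
  intros Rd Rt Om dOm HRd HR0 Hsol HPsi0 HOm0.
  change (Psi (Rt 0) Rd) with (2 - trace_root Rd Rt 0) in HPsi0, HOm0.
  replace (2 - (2 - trace_root Rd Rt 0)) with (trace_root Rd Rt 0) in HOm0 by ring.
  destruct (trace_root_bounded_below J kR kOm Rd Rt Om dOm Hsol HRd HR0 lmax HS
              (form_nonneg J m Hlo Hm) Hup HL HkR HkO ltac:(lra) HOm0) as [d [Hd Hbelow]].
  split.
  - intros t Ht. change (2 - trace_root Rd Rt t < 2). pose proof (Hbelow t Ht). lra.
  - intros t Ht. rewrite !norm2_e_R, !norm2_e_Omega_zero by assumption.
    apply (closed_loop_exp_decay J kR kOm Rd Rt Om dOm Hsol HRd HR0); try assumption.
    intros s Hs. pose proof (Hbelow s Hs). lra.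
Qed.
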